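(* Let $d\ge5$ with $d\equiv1\pmod 4$, and let $g:\{-1,1\}^d\to\mathbb{R}$, $g(x)=|x_1+\dots+x_d|$, with Fourier coefficients $\hat g(S)$, $S\subseteq[d]$. Then for all $u\in[d]$, \[\sum_{S\subseteq[d],\,u\in S}|\hat g(S)|\ge\frac{2^{(d-1)/2}}{2\sqrt{d-1}}.\]
   Context: The Fourier coefficients of $g:\{-1,1\}^d\to\mathbb{R}$ are the unique reals $\hat g(S)$ with $g(x)=\sum_{S\subseteq[d]}\hat g(S)\prod_{i\in S}x_i$ for all $x$. *)

From mathcomp Require Import all_boot all_order all_algebra.
From mathcomp Require Import reals.
Set Implicit Arguments. Unset Strict Implicit. Unset Printing Implicit Defensive.
Import Order.TTheory GRing.Theory Num.Theory.
Local Open Scope ring_scope.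

Definition is_cube_point (R : realType) (d : nat) (x : 'I_d -> R) : Prop :=
  forall i, x i = 1 \/ x i = -1.

Definition fourier_coeffs (R : realType) (d : nat)
    (g : ('I_d -> R) -> R) (c : {set 'I_d} -> R) : Prop :=
  forall x : 'I_d -> R, is_cube_point x ->
    g x = \sum_(S : {set 'I_d}) c S * \prod_(i in S) x i.

Definition abs_sum (R : realType) (d : nat) (x : 'I_d -> R) : R :=
  `| \sum_(i < d) x i |.

From mathcomp Require Import all_boot all_order all_algebra.
From mathcomp Require Import reals complex.
From mathcomp Require Import zify ring lra.
Import Order.TTheory GRing.Theory Num.Theory.
Set Implicit Arguments. Unset Strict Implicit. Unset Printing Implicit Defensive.
Local Open Scope ring_scope.

(* Duality: for any complex weight w on the cube, the real number
   sum_x Im w(x) g(x) equals sum_S ghat(S) Im <w, chi_S>.  Take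
   w(x) = x_u prod_{i <> u} (1 + i x_i).  Its correlation with chi_S factors
   over the coordinates: it vanishes when u \notin S and has modulus 2^d
   otherwise, so sum_x Im w(x) g(x) <= 2^d sum_{S, u in S} |ghat S|.
   On the other hand w(x) = +-(1+i)^(d-1-k) (1-i)^k, k the number of -1's off
   u, and grouping the cube by k shows that for d = 2m+1 the left-hand side is
   4 I_m, where I_m = Im sum_{k<m} C(2m,k) (1+i)^(2m-k) (1-i)^k.  Since
   (1+i)(1-i) = 2, I_(m+1) = 4 I_m + 2^(m+1) C(2m,m), hence
   2 I_m >= 2^m C(2m,m) >= 2^m 4^m / (2 sqrt(2m)). *)

Lemma mul_bin_center_succ m :
  (m.+1 * 'C(m.+1.*2, m.+1) = 2 * m.*2.+1 * 'C(m.*2, m))%N.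
Proof.
rewrite doubleS -mul_bin_diag /= -mulnA (mul_bin_down m.*2.+1).
have -> : (m.*2.+1 - m = m.+1)%N by lia.
by rewrite mulnA mul2n doubleS.
Qed.

Lemma bin_center_succ_le m : ('C(m.+1.*2, m.+1) <= 4 * 'C(m.*2, m))%N.
Proof. have := mul_bin_center_succ m; nia. Qed.

Lemma bin_center_sqr_ge m : (16 ^ m <= 'C(m.*2, m) ^ 2 * (4 * m + 1))%N.
Proof.
elim: m => [|m IH]; first by rewrite bin0.
have rec := mul_bin_center_succ m.
set c' := 'C(_, m.+1) in rec *; set c := 'C(_, m) in rec IH.
have poly : (m.+1 ^ 2 * 16 * (4 * m + 1) <= (2 * m.*2.+1) ^ 2 * (4 * m + 5))%N.
  rewrite -muln2; nia.
rewrite -(leq_pmul2l (_ : 0 < m.+1 ^ 2)%N) ?expn_gt0 //.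
have -> : (m.+1 ^ 2 * (c' ^ 2 * (4 * m.+1 + 1)) = (m.+1 * c') ^ 2 * (4 * m + 5))%N by ring.
rewrite rec [(16 ^ _)%N]expnS.
have := leq_mul (leqnn (m.+1 ^ 2 * 16)) IH; have := leq_mul poly (leqnn (c ^ 2)).
nia.
Qed.

Lemma bin_center_ge (R : rcfType) m : (0 < m)%N ->
  (2 ^+ m) ^+ 2 <= 2 * Num.sqrt m.*2%:R * 'C(m.*2, m)%:R :> R.
Proof.
move=> m_gt0; rewrite -(@ler_pXn2r _ 2) ?nnegrE ?mulr_ge0 ?exprn_ge0 ?sqrtr_ge0 //.
have := bin_center_sqr_ge m; rewrite -(ler_nat R) natrM !natrX natrD natrM.
rewrite -!exprM (_ : m * 2 * 2 = 4 * m)%N ?exprM -?natrX; last by lia.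
move/le_trans; apply.
have : 1 <= m%:R :> R by rewrite ler1n.
rewrite !exprMn sqr_sqrtr ?ler0n // -muln2 natrM.
have := sqr_ge0 ('C(m.*2, m)%:R : R); nra.
Qed.

Section BinomialHead.
Variables (T : comNzRingType) (a b : T).

Definition binomial_head n m : T :=
  \sum_(k < m) (a ^+ (n - k) * b ^+ k) *+ 'C(n, k).

Lemma binomial_head0 n : binomial_head n 0 = 0.
Proof. by rewrite /binomial_head big_ord0. Qed.

Lemma binomial_headS n m :
  binomial_head n m.+1 = binomial_head n m + (a ^+ (n - m) * b ^+ m) *+ 'C(n, m).
Proof. by rewrite /binomial_head big_ord_recr. Qed.

Lemma binomial_headSS n m :
  binomial_head n.+1 m.+1 =
  (a + b) * binomial_head n m + (a ^+ (n - m).+1 * b ^+ m) *+ 'C(n, m).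
Proof.
elim: m => [|m IH].
  by rewrite binomial_headS !binomial_head0 !subn0 !bin0 mulr0 !add0r exprS.
rewrite binomial_headS IH binomial_headS binS subSS !mulrnDr.
have [lt_mn|le_nm] := ltnP m n.
  rewrite (_ : n - m = (n - m.+1).+1)%N; last by lia.
  by rewrite !exprS; ring.
rewrite (bin_small (_ : n < m.+1)%N) ?ltnS // !mulr0n.
rewrite (_ : n - m = 0)%N; last by lia.
by rewrite !exprS; ring.
Qed.

End BinomialHead.

Section GaussianBinomialHead.
Variable R : rcfType.
Local Open Scope complex_scope.

Definition zp : R[i] := 1 + 'i.
Definition zm : R[i] := 1 - 'i.
Local Notation Q := (binomial_head zp zm).
Local Notation Im := (@complex.Im R).
Local Notation normc := (@ComplexField.Normc.normc R).

Lemma zpDzm : zp + zm = 2.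
Proof. by rewrite /zp /zm addrACA subrr addr0. Qed.

Lemma zpXzm k : zp ^+ k * zm ^+ k = (2 ^+ k)%:C.
Proof.
rewrite -exprMn rmorphXn rmorph_nat /zp /zm.
by congr (_ ^+ _); apply/eqP; rewrite eq_complex /=; apply/andP; split; apply/eqP; lra.
Qed.

(* Restated from [raddfD] etc. so that the rewritten terms keep the bare head
   [Im] instead of the coercion of its additive structure, which would block
   the later rewrites with [Im_realM] and friends. *)
Lemma ImD (z w : R[i]) : Im (z + w) = Im z + Im w.
Proof. exact: raddfD. Qed.

Lemma ImB (z w : R[i]) : Im (z - w) = Im z - Im w.
Proof. exact: raddfB. Qed.

Lemma ImMn (z : R[i]) n : Im (z *+ n) = Im z *+ n.
Proof. exact: raddfMn. Qed.

Lemma Im_sum (I : finType) (P : pred I) (F : I -> R[i]) :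
  Im (\sum_(i | P i) F i) = \sum_(i | P i) Im (F i).
Proof. exact: raddf_sum. Qed.

Lemma Im_realM (x : R) (z : R[i]) : Im (x%:C * z) = x * Im z.
Proof. by case: z => p q /=; lra. Qed.

Lemma Im_natM n (z : R[i]) : Im (n%:R * z) = n%:R * Im z.
Proof. by rewrite -(rmorph_nat (real_complex R)) Im_realM. Qed.

Lemma Im_real (x : R) : Im x%:C = 0.
Proof. by []. Qed.

Lemma Im_le_normc (z : R[i]) : `|Im z| <= normc z.
Proof.
case: z => a b; rewrite /ComplexField.Normc.normc /= -sqrtr_sqr.
by apply: ler_wsqrtr; rewrite lerDr sqr_ge0.
Qed.

Lemma Im_zpXzm k : Im (zp ^+ k.+1 * zm ^+ k) = 2 ^+ k.
Proof. by rewrite exprS -mulrA zpXzm mulrC Im_realM /=; lra. Qed.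

Lemma Im_binomial_head_center_succ m :
  Im (Q m.+1.*2 m.+1) = 4 * Im (Q m.*2 m) + 2 ^+ m.+1 * 'C(m.*2, m)%:R.
Proof.
have -> : Q m.+1.*2 m.+1 = Q m.+1.*2 m.+2 - (zp ^+ m.+1 * zm ^+ m.+1) *+ 'C(m.+1.*2, m.+1).
  by rewrite [Q _ m.+2]binomial_headS (_ : m.+1.*2 - m.+1 = m.+1)%N ?addrK //; lia.
rewrite doubleS !binomial_headSS zpDzm (_ : m.*2 - m = m)%N; last by lia.
rewrite (_ : m.*2.+1 - m.+1 = m)%N; last by lia.
rewrite !zpXzm !(ImB, ImD, ImMn, Im_natM, Im_zpXzm, Im_real) !mul0rn subr0 addr0.
by rewrite exprS -mulr_natr; ring.
Qed.

Lemma Im_binomial_head_center_ge m : (0 < m)%N ->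
  2 ^+ m * 'C(m.*2, m)%:R <= 2 * Im (Q m.*2 m).
Proof.
case: m => // m _; elim: m => [|m IH].
  rewrite Im_binomial_head_center_succ binomial_head0 Im_real bin0.
  by rewrite (_ : 'C(1.*2, 1) = 2)%N //; lra.
rewrite Im_binomial_head_center_succ.
have : 'C(m.+2.*2, m.+2)%:R <= 4 * 'C(m.+1.*2, m.+1)%:R :> R.
  by rewrite -natrM ler_nat bin_center_succ_le.
have : 0 < 2 ^+ m :> R by rewrite exprn_gt0.
move: IH; rewrite !exprS; nra.
Qed.

Lemma sum_Im_binomial_sign m :
  \sum_(k < m.*2.+1) (Im (zp ^+ (m.*2 - k) * zm ^+ k) *
     (`|m.*2.+1%:R - 2 * k%:R| - `|m.*2.+1%:R - 2 * k.+1%:R|)) *+ 'C(m.*2, k) =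
  4 * Im (Q m.*2 m).
Proof.
pose f k := Im (zp ^+ (m.*2 - k) * zm ^+ k) *+ 'C(m.*2, k).
pose sgn k : R := `|m.*2.+1%:R - 2 * k%:R| - `|m.*2.+1%:R - 2 * k.+1%:R|.
have oddE : m.*2.+1%:R = 2 * m%:R + 1 :> R by rewrite -natr1 -muln2 natrM mulrC.
have sgn_lt k : (k < m)%N -> sgn k = 2.
  rewrite -(ler_nat R) /sgn oddE -natr1 => km.
  rewrite !ger0_norm; lra.
have sgn_gt k : (m < k)%N -> sgn k = -2.
  rewrite -(ler_nat R) /sgn oddE -!natr1 => km.
  rewrite !ler0_norm; lra.
have sgn_m : sgn m = 0.
  by rewrite /sgn oddE -natr1 ger0_norm ?ler0_norm; lra.
have f_m : f m = 0.
  by rewrite /f (_ : m.*2 - m = m)%N ?zpXzm ?Im_real ?mul0rn //; lia.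
have f_sum : \sum_(0 <= k < m.*2.+1) f k = 0.
  rewrite big_mkord /f; under eq_bigr do rewrite -ImMn.
  by rewrite -Im_sum -exprDn zpDzm -(rmorph_nat (real_complex R)) -rmorphXn.
have ImQ : Im (Q m.*2 m) = \sum_(0 <= k < m) f k.
  by rewrite big_mkord Im_sum; apply: eq_bigr => k _; rewrite ImMn.
have -> : \sum_(k < m.*2.+1) (Im (zp ^+ (m.*2 - k) * zm ^+ k) * sgn k) *+ 'C(m.*2, k) =
          \sum_(0 <= k < m.*2.+1) f k * sgn k.
  by rewrite big_mkord; apply: eq_bigr => k _; rewrite mulrnAl.
have split_m (g : nat -> R) : \sum_(0 <= k < m.*2.+1) g k =
    \sum_(0 <= k < m) g k + g m + \sum_(m.+1 <= k < m.*2.+1) g k.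
  have [m_le m_lt] : (m <= m.*2.+1)%N /\ (m < m.*2.+1)%N by split; lia.
  by rewrite (big_cat_nat _ m_le) //= (big_ltn m_lt) addrA.
rewrite split_m f_m addr0 in f_sum.
rewrite split_m sgn_m mulr0 addr0.
rewrite (eq_big_nat _ _ (F2 := fun k => f k * 2)); last first.
  by move=> k /andP[_ km]; rewrite sgn_lt.
rewrite [X in _ + X](eq_big_nat _ _ (F2 := fun k => f k * -2)); last first.
  by move=> k /andP[mk _]; rewrite sgn_gt.
rewrite -!mulr_suml ImQ; lra.
Qed.

End GaussianBinomialHead.

Lemma sum_subset_card (V : nmodType) (T : finType) (B : {set T}) (F : nat -> V) :
  \sum_(A : {set T} | A \subset B) F #|A| = \sum_(k < #|B|.+1) F k *+ 'C(#|B|, k).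
Proof.
rewrite (partition_big (fun A : {set T} => inord #|A| : 'I_#|B|.+1) xpredT) //=.
apply: eq_bigr => k _; rewrite -cards_draws -sumr_const.
apply: eq_big => [A|A /andP[sAB /eqP <-]]; last by rewrite inordK // ltnS subset_leq_card.
rewrite inE; case sAB: (A \subset B) => //=.
by rewrite -val_eqE /= inordK // ltnS subset_leq_card.
Qed.

Lemma sum_set_splitU1 (V : nmodType) (T : finType) (a : T) (F : {set T} -> V) :
  \sum_(A : {set T}) F A = \sum_(A : {set T} | a \notin A) (F A + F (a |: A)).
Proof.
rewrite big_split /= (bigID (fun A : {set T} => a \in A)) /= addrC; congr (_ + _).
rewrite (reindex_onto (fun A => a |: A) (fun A => A :\ a)) /=; last exact: setD1K.
apply: eq_big => A; last by [].
rewrite setU11 /=; apply/eqP/idP => [<-|/setU1K //].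
by rewrite !inE eqxx.
Qed.

Section CubeWitness.
Variables (R : realType) (d : nat) (u : 'I_d).
Implicit Types (X Y S : {set 'I_d}).
Local Open Scope complex_scope.
Local Notation Im := (@complex.Im R).
Local Notation normc := (@ComplexField.Normc.normc R).
Local Notation zp := (zp R).
Local Notation zm := (zm R).

Definition cube_point X : 'I_d -> R :=
  fun i => if i \in X then -1 else 1.

Lemma cube_point_is_cube X : is_cube_point (cube_point X).
Proof. by move=> i; rewrite /cube_point; case: (i \in X); [right|left]. Qed.

Definition witness_factor i (t : R) : R[i] :=
  if i == u then t%:C else 1 + 'i * t%:C.

Definition witness (x : 'I_d -> R) : R[i] := \prod_i witness_factor i (x i).

Definition char_factor S i (t : R) : R[i] :=
  witness_factor i t * (if i \in S then t else 1)%:C.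

Lemma witness_char_sum S :
  \sum_X witness (cube_point X) * (\prod_(i in S) cube_point X i)%:C =
  \prod_i (char_factor S i (-1) + char_factor S i 1).
Proof.
rewrite bigA_distr; apply: eq_bigr => X _.
rewrite rmorph_prod /witness (big_mkcond (mem S)) -big_split /=.
by apply: eq_bigr => i _; rewrite /char_factor /cube_point; case: (i \in X); case: (i \in S).
Qed.

Lemma normc_char_factor_sum S i :
  normc (char_factor S i (-1) + char_factor S i 1) = if (i == u) && (i \notin S) then 0 else 2.
Proof.
rewrite /char_factor /witness_factor.
case: (i == u); case: (i \in S); rewrite /ComplexField.Normc.normc /=;
  [|by rewrite -[RHS]sqrtr0; congr Num.sqrt; ring|..].
all: by rewrite -[RHS](normr_nat R 2) -sqrtr_sqr; congr Num.sqrt; ring.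
Qed.

Lemma Im_witness_char_sum_le S :
  `|Im (\sum_X witness (cube_point X) * (\prod_(i in S) cube_point X i)%:C)|
    <= if u \in S then 2 ^+ d else 0.
Proof.
apply: le_trans (Im_le_normc _) _.
rewrite witness_char_sum.
rewrite (big_morph _ (@ComplexField.Normc.normcM R) (@ComplexField.Normc.normc1 R)).
under eq_bigr do rewrite normc_char_factor_sum.
case: ifP => uS.
  rewrite (eq_bigr (fun=> 2)) ?prodr_const ?card_ord // => i _.
  by case: eqP => // ->; rewrite uS.
by rewrite (bigD1 u) //= eqxx uS mul0r.
Qed.

Lemma witness_setC1 x :
  witness x = (x u)%:C * \prod_(i in [set~ u]) witness_factor i (x i).
Proof.
rewrite /witness (bigD1 u) //= {1}/witness_factor eqxx; congr (_ * _).
by apply: eq_bigl => i; rewrite in_setC1.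
Qed.

Lemma prod_witness_factor_setC1 Y : u \notin Y ->
  \prod_(i in [set~ u]) witness_factor i (cube_point Y i) = zp ^+ (d.-1 - #|Y|) * zm ^+ #|Y|.
Proof.
move=> uY; have sYC : Y \subset [set~ u] by rewrite subsetC sub1set inE.
rewrite (big_setID Y) /= (setIidPr sYC) mulrC; congr (_ * _).
  have -> : (d.-1 - #|Y|)%N = #|[set~ u] :\: Y|.
    by rewrite cardsD (setIidPr sYC) cardsC1 card_ord.
  rewrite -prodr_const.
  apply: eq_bigr => i /setDP[]; rewrite in_setC1 => /negbTE iu /negbTE iY.
  by rewrite /witness_factor iu /cube_point iY mulr1.
rewrite -prodr_const; apply: eq_bigr => i iY.
move/subsetP/(_ i iY): sYC; rewrite in_setC1 => /negbTE iu.
by rewrite /witness_factor iu /cube_point iY rmorphN1 mulrN1.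
Qed.

Lemma sum_cube_point X : \sum_(i < d) cube_point X i = d%:R - 2 * #|X|%:R.
Proof.
rewrite (eq_bigr (fun i => 1 - (if i \in X then 1 else 0) *+ 2)); last first.
  by move=> i _; rewrite /cube_point; case: (i \in X); rewrite ?mulr0n ?subr0 //; ring.
by rewrite sumrB sumr_const card_ord sumrMnl -big_mkcond /= sumr_const mulr_natl.
Qed.

Lemma witness_pairing_eq :
  \sum_X Im (witness (cube_point X)) * abs_sum (cube_point X) =
  \sum_(k < d.-1.+1) (Im (zp ^+ (d.-1 - k) * zm ^+ k) *
     (`|d%:R - 2 * k%:R| - `|d%:R - 2 * k.+1%:R|)) *+ 'C(d.-1, k).
Proof.
pose F k := Im (zp ^+ (d.-1 - k) * zm ^+ k) * (`|d%:R - 2 * k%:R| - `|d%:R - 2 * k.+1%:R|).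
transitivity (\sum_(Y : {set 'I_d} | Y \subset [set~ u]) F #|Y|); last first.
  by rewrite sum_subset_card cardsC1 card_ord.
rewrite (sum_set_splitU1 u); apply: eq_big => [Y|Y uY]; first by rewrite subsetC sub1set inE.
have offu : \prod_(i in [set~ u]) witness_factor i (cube_point (u |: Y) i) =
            \prod_(i in [set~ u]) witness_factor i (cube_point Y i).
  by apply: eq_bigr => i; rewrite in_setC1 /cube_point in_setU1 => /negbTE ->.
rewrite !witness_setC1 offu (prod_witness_factor_setC1 uY) /abs_sum !sum_cube_point cardsU1 uY.
rewrite /cube_point setU11 (negbTE uY) rmorphN1 mulN1r mul1r raddfN /=.
by rewrite /F add1n mulNr -mulrBr.
Qed.

Lemma witness_pairing_le ghat : fourier_coeffs (@abs_sum R d) ghat ->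
  \sum_X Im (witness (cube_point X)) * abs_sum (cube_point X) <=
    2 ^+ d * \sum_(S : {set 'I_d} | u \in S) `|ghat S|.
Proof.
move=> hF; have expand X := hF _ (cube_point_is_cube X).
under eq_bigr do rewrite expand mulr_sumr.
rewrite exchange_big mulr_sumr [X in _ <= X]big_mkcond /=; apply: ler_sum => S _.
have -> : \sum_X Im (witness (cube_point X)) * (ghat S * \prod_(i in S) cube_point X i) =
          ghat S * Im (\sum_X witness (cube_point X) * (\prod_(i in S) cube_point X i)%:C).
  rewrite Im_sum mulr_sumr; apply: eq_bigr => X _.
  by rewrite [witness _ * _]mulrC Im_realM; ring.
apply: le_trans (ler_norm _) _; rewrite normrM.
have := Im_witness_char_sum_le S; case: (u \in S) => bound.
  by rewrite mulrC ler_wpM2r.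
by move: bound; rewrite normr_le0 => /eqP ->; rewrite normr0 mulr0.
Qed.

End CubeWitness.

Theorem lemma25 (R : realType) (d : nat) (hd : (5 <= d)%N) (hmod : (d %% 4 = 1)%N)
  (ghat : {set 'I_d} -> R) (hF : fourier_coeffs (@abs_sum R d) ghat) (u : 'I_d) :
  2 ^+ ((d - 1) %/ 2) / (2 * Num.sqrt ((d - 1)%:R)) <=
    \sum_(S : {set 'I_d} | u \in S) `|ghat S|.
Proof.
have [m dE] : exists m, d = m.*2.+1 by exists (d %/ 4)%N.*2; lia.
have m_gt0 : (0 < m)%N by lia.
subst d; rewrite subn1 /= (_ : m.*2 %/ 2 = m)%N; last by rewrite -muln2 mulnK.
have pairing := witness_pairing_le u hF.
have e2 : 2 ^+ m.*2.+1 = 2 * (2 ^+ m) ^+ 2 :> R by rewrite exprS -exprM muln2.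
rewrite witness_pairing_eq sum_Im_binomial_sign e2 in pairing.
have lb := Im_binomial_head_center_ge R m_gt0.
have central := bin_center_ge R m_gt0.
have t_gt0 : 0 < 2 ^+ m :> R by rewrite exprn_gt0.
have s_gt0 : 0 < Num.sqrt m.*2%:R :> R by rewrite sqrtr_gt0 ltr0n double_gt0.
rewrite ler_pdivrMr ?mulr_gt0 //.
move: pairing lb central t_gt0 s_gt0.
set t := 2 ^+ m; set c := 'C(_, _)%:R; set s := Num.sqrt _; set P := complex.Im _.
set w := \sum_(S | _) _ => pairing lb central t_gt0 s_gt0.
have c_le : c <= t * w by nra.
nra.
Qed.
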